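(* Let $\mathcal{X}=\mathcal{X}_1\times\cdots\times\mathcal{X}_n$ and $\mathcal{Y}=\mathcal{Y}_1\times\cdots\times\mathcal{Y}_m$ be finite sets, and let $k\in\{1,\ldots,n\}$. Let $\mathcal{P}$ be the partition model on $\mathcal{X}$ whose blocks are the sets $\{x_1\}\times\cdots\times\{x_k\}\times\mathcal{X}_{k+1}\times\cdots\times\mathcal{X}_n$ for all $(x_1,\ldots,x_k)\in\mathcal{X}_1\times\cdots\times\mathcal{X}_k$. If $$1+\sum_{j\in[m]}(|\mathcal{Y}_j|-1)\;\geq\;\Big(\prod_{i\in[k]}|\mathcal{X}_i|\Big)\Big/\max_{j\in[k]}|\mathcal{X}_j|,$$ then every distribution contained in $\mathcal{P}$ can be approximated arbitrarily well by distributions from $\operatorname{RBM}_{\mathcal{X},\mathcal{Y}}$ (i.e., $\mathcal{P}$ is contained in the topological closure of $\operatorname{RBM}_{\mathcal{X},\mathcal{Y}}$).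
   Context: For a finite product set $\mathcal{Z}=\mathcal{Z}_1\times\cdots\times\mathcal{Z}_k$, fix in each $\mathcal{Z}_i$ a reference state $z_i^0$ and let $F^{\mathcal{Z}}(z)=\big(1,(\mathbb{1}[z_i=a])_{i\in[k],\,a\in\mathcal{Z}_i\setminus\{z_i^0\}}\big)^\top$ be the sufficient statistics of the independence model on $\mathcal{Z}$. The restricted Boltzmann machine model $\operatorname{RBM}_{\mathcal{X},\mathcal{Y}}$ with visible states $\mathcal{X}$ and hidden states $\mathcal{Y}$ is the set of probability distributions on $\mathcal{X}$ of the form $p(x)=\frac{1}{Z(\Theta)}\sum_{y\in\mathcal{Y}}\exp\big(F^{\mathcal{X}}(x)^\top\Theta F^{\mathcal{Y}}(y)\big)$, $x\in\mathcal{X}$, for all real matrices $\Theta$ of the appropriate size, where $Z(\Theta)$ is the normalizing constant (i.e., the visible marginals of the exponential family on $\mathcal{X}\times\mathcal{Y}$ with sufficient statistics $F^{\mathcal{X}}(x)\otimes F^{\mathcal{Y}}(y)$). Given disjoint nonempty sets $A_1,\ldots,A_K\subseteq\mathcal{X}$ covering $\mathcal{X}$, the partition model with these blocks is the set of all mixtures $\sum_{k}\lambda_k u_{A_k}$ with $\lambda_k\ge 0$, $\sum_k\lambda_k=1$, where $u_{A_k}$ is the uniform distribution on $A_k$. *)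

From HB Require Import structures.
From mathcomp Require Import all_boot all_order all_algebra.
From mathcomp Require Import reals sequences exp.
Set Implicit Arguments. Unset Strict Implicit. Unset Printing Implicit Defensive.
Import Order.TTheory GRing.Theory Num.Theory.
Local Open Scope ring_scope.

(* A finite product set Z_1 x ... x Z_n with |Z_i| = s i; Z_i = 'I_(s i).
   The reference state z_i^0 of Z_i is the element 0. *)
Definition state (n : nat) (s : 'I_n -> nat) : finType :=
  {dffun forall i : 'I_n, 'I_(s i)}.

(* Index set of the sufficient statistics: None is the constant 1,
   Some (i, a) is the indicator [z_i = a.+1] (a.+1 ranges over Z_i \ {0}). *)
Definition feat (n : nat) (s : 'I_n -> nat) : finType :=
  option {i : 'I_n & 'I_(s i).-1}.

Definition suffstat (R : realType) (n : nat) (s : 'I_n -> nat)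
  (z : state s) (u : feat s) : R :=
  match u with
  | None => 1
  | Some (existT i a) => if val (z i) == (val a).+1 then 1 else 0
  end.

Definition rbm_weight (R : realType) (n m : nat) (sx : 'I_n -> nat)
  (sy : 'I_m -> nat) (Theta : feat sx -> feat sy -> R) (x : state sx) : R :=
  \sum_(y : state sy)
     expR (\sum_(u : feat sx) \sum_(v : feat sy)
             suffstat R x u * Theta u v * suffstat R y v).

Definition rbm (R : realType) (n m : nat) (sx : 'I_n -> nat)
  (sy : 'I_m -> nat) (Theta : feat sx -> feat sy -> R) (x : state sx) : R :=
  rbm_weight Theta x / \sum_(x' : state sx) rbm_weight Theta x'.

Definition unif (R : realType) (T : finType) (A : {set T}) (x : T) : R :=
  (x \in A)%:R / #|A|%:R.

Definition in_partition_model (R : realType) (T : finType)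
  (blocks : {set {set T}}) (p : T -> R) : Prop :=
  exists lam : {set T} -> R,
    (forall A, A \in blocks -> 0 <= lam A) /\
    \sum_(A in blocks) lam A = 1 /\
    forall x, p x = \sum_(A in blocks) lam A * unif R A x.

Definition prefix_block (n : nat) (sx : 'I_n -> nat) (k : nat) (x : state sx)
  : {set state sx} :=
  [set x' : state sx | [forall i : 'I_n, (i < k)%N ==> (x' i == x i)]].

Definition prefix_blocks (n : nat) (sx : 'I_n -> nat) (k : nat)
  : {set {set state sx}} :=
  [set prefix_block k x | x : state sx].

From HB Require Import structures.
From mathcomp Require Import all_boot all_order all_algebra perm.
From mathcomp Require Import reals sequences exp.
From mathcomp Require Import ring lra.
Set Implicit Arguments. Unset Strict Implicit. Unset Printing Implicit Defensive.
Import Order.TTheory GRing.Theory Num.Theory.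
Local Open Scope ring_scope.

(* A column of Theta makes the potential of a hidden feature an arbitrary
   additive function sum_i phi_i(x_i) of the visible state.  Let j be one of
   the first k coordinates with |X_j| maximal and G the other first k
   coordinates: the hypothesis says that the configurations of x on G can be
   coded injectively by the hidden features (the constant feature included),
   and p is a function of this code and of x_j.  The feature coding a
   configuration gets as potential a target log-probability in x_j minus a
   large multiple of the Hamming distance to that configuration.  Then the
   hidden state whose only active feature is the code of x contributes
   p x + d to the weight of x, every other hidden state is penalised by a
   factor exp(-T), and the normalised weights tend to p as d -> 0, T -> oo. *)

Section BigSums.
Variable V : nmodType.

Lemma sum_option (T : finType) (f : option T -> V) :
  \sum_(v : option T) f v = f None + \sum_(t : T) f (Some t).
Proof.
rewrite (bigD1 None) //= (reindex_omap Some id) //=; last by case.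
by congr (_ + _); apply: eq_bigl => t; rewrite eqxx.
Qed.

Lemma sum_tagged (I : finType) (T_ : I -> finType) (f : {i : I & T_ i} -> V) :
  \sum_(w : {i : I & T_ i}) f w = \sum_(i : I) \sum_(a : T_ i) f (Tagged T_ a).
Proof.
rewrite (sig_big_dep (fun _ => true) (fun _ _ => true)) /=.
by apply: eq_bigr => -[i a].
Qed.

End BigSums.

Section RealBounds.
Variable R : realType.

Lemma sum_expR_bounds (T : finType) (f : T -> R) (t0 : T) (c : R) :
  (forall t, t != t0 -> f t <= c) ->
  expR (f t0) <= \sum_t expR (f t) <= expR (f t0) + #|T|%:R * expR c.
Proof.
move=> fc; rewrite (bigD1 t0) //=; apply/andP; split.
  by rewrite lerDl; apply: sumr_ge0 => t _; exact: expR_ge0.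
rewrite lerD2l; apply: le_trans (_ : _ <= \sum_(t : T) expR c) _; last first.
  by rewrite sumr_const mulr_natl.
rewrite [leRHS](bigD1 t0) //= -[leLHS]add0r lerD ?expR_ge0 //.
by apply: ler_sum => t /fc; rewrite ler_expR.
Qed.

Lemma normalized_perturbation_le (T : finType) (p rho : T -> R) (d e : R) :
  (forall x, 0 <= p x) -> \sum_x p x = 1 -> 0 <= d -> 0 <= e ->
  (forall x, p x + d <= rho x <= p x + d + e) ->
  forall x, `|p x - rho x / \sum_x' rho x'| <= (#|T|%:R + 1) * (d + e).
Proof.
move=> p0 p1 d0 e0 rho_bd x.
set S := \sum_x' rho x'; set N : R := #|T|%:R.
have sumpD c : \sum_x' (p x' + c) = 1 + N * c by rewrite big_split /= p1 sumr_const mulr_natl.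
have S_lb : 1 + N * d <= S by rewrite -sumpD ler_sum // => y _; case/andP: (rho_bd y).
have S_ub : S <= 1 + N * (d + e).
  by rewrite -sumpD ler_sum // => y _; rewrite addrA; case/andP: (rho_bd y).
have px1 : p x <= 1 by rewrite -p1 (bigD1 x) //= lerDl sumr_ge0.
have Nd : 0 <= N * d by rewrite mulr_ge0.
have S_gt0 : 0 < S by lra.
rewrite -{1}(mulfK (lt0r_neq0 S_gt0) (p x)) -mulrBl normrM normfV (gtr0_norm S_gt0).
rewrite ler_pdivrMr //; have /andP[rx_lb rx_ub] := rho_bd x.
have pS_ub : p x * S <= p x * (1 + N * (d + e)) by rewrite ler_wpM2l.
have pS_lb : p x <= p x * S by rewrite ler_peMr //; lra.
have pNde : p x * (N * (d + e)) <= N * (d + e).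
  by rewrite ler_piMl // mulr_ge0 // addr_ge0.
rewrite ler_norml; apply/andP; split; nra.
Qed.

End RealBounds.

Lemma factor_through (A : finType) (B : eqType) (C : Type) (a0 : A)
    (f : A -> B) (g : A -> C) :
  (forall x z, f x = f z -> g x = g z) ->
  exists h : B -> C, (forall x, h (f x) = g x) /\ (forall b, exists x, h b = g x).
Proof.
move=> gf; exists (fun b => if [pick x | f x == b] is Some x then g x else g a0).
split=> [x|b]; last by case: pickP => [x _|_]; [exists x | exists a0].
by case: pickP => [z /eqP /gf //|/(_ x)]; rewrite eqxx.
Qed.

Lemma exists_injection_at (U T : finType) (u0 : U) (t0 : T) :
  (#|U| <= #|T|)%N -> exists f : U -> T, injective f /\ f u0 = t0.
Proof.
move=> UT; pose f u := enum_val (widen_ord UT (enum_rank u)).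
have f_inj : injective f.
  by move=> u v /enum_val_inj [] /val_inj /enum_rank_inj.
exists (tperm (f u0) t0 \o f); split; last exact: tpermL.
exact: inj_comp perm_inj f_inj.
Qed.

Section IndependenceStatistics.
Variable R : realType.
Variables (n : nat) (s : 'I_n -> nat).

Definition additive_fun (phi : 'I_n -> nat -> R) (z : state s) : R :=
  \sum_i phi i (val (z i)).

Definition additive_coef (phi : 'I_n -> nat -> R) (u : feat s) : R :=
  match u with
  | None => \sum_i phi i 0%N
  | Some (existT i a) => phi i (val a).+1 - phi i 0%N
  end.

Lemma suffstat_Some (z : state s) (w : {i : 'I_n & 'I_(s i).-1}) :
  suffstat R z (Some w) = if val (z (tag w)) == (val (tagged w)).+1 then 1 else 0.
Proof. by case: w. Qed.

Lemma sum_indicator_succ (k c : nat) (g : nat -> R) : (c < k)%N ->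
  \sum_(a : 'I_k.-1) (if c == (val a).+1 then 1 else 0) * g (val a).+1
  = if c == 0%N then 0 else g c.
Proof.
case: c => [|c] ck /=; first by rewrite big1 // => a _; rewrite mul0r.
have ck' : (c < k.-1)%N by rewrite -ltnS prednK // (leq_ltn_trans _ ck).
rewrite (bigD1 (Ordinal ck')) //= eqxx mul1r big1 ?addr0 // => a.
by rewrite eqSS -val_eqE /= eq_sym => /negbTE ->; rewrite mul0r.
Qed.

Lemma suffstat_additive (phi : 'I_n -> nat -> R) (z : state s) :
  \sum_u suffstat R z u * additive_coef phi u = additive_fun phi z.
Proof.
rewrite sum_option sum_tagged /= mul1r -big_split; apply: eq_bigr => i _ /=.
under eq_bigr => a _ do rewrite mulrBr.
rewrite sumrB (sum_indicator_succ _ (ltn_ord (z i))).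
rewrite (sum_indicator_succ (fun=> phi i 0%N) (ltn_ord (z i))).
by case: eqP => [->|_]; rewrite ?subrr ?addr0 // addrC subrK.
Qed.

Lemma suffstat_inj (y y' : state s) :
  (forall u, suffstat R y u = suffstat R y' u) -> y = y'.
Proof.
have agree_nz (z z' : state s) i : (forall u, suffstat R z u = suffstat R z' u) ->
    val (z i) != 0%N -> val (z i) = val (z' i).
  move=> zz' nz; have lt : ((val (z i)).-1 < (s i).-1)%N.
    by rewrite -ltnS !prednK ?(leq_ltn_trans _ (ltn_ord (z i))) // lt0n.
  have := zz' (Some (Tagged (fun i => 'I_(s i).-1) (Ordinal lt))).
  rewrite /= prednK ?lt0n // eqxx.
  by case: eqP => [-> //|_ /eqP]; rewrite oner_eq0.
move=> yy'; apply/ffunP => i; apply: val_inj.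
have [y0|] := eqVneq (val (y i)) 0%N; last exact: agree_nz.
have [y'0|] := eqVneq (val (y' i)) 0%N; first by rewrite y0 y'0.
by move/(agree_nz y' y i (fun u => esym (yy' u))) => <-.
Qed.

Definition energy (b : feat s -> R) (y : state s) : R :=
  \sum_v b v * suffstat R y v.

Lemma energyE (b : feat s -> R) (y : state s) :
  energy b y = b None + \sum_w b (Some w) * suffstat R y (Some w).
Proof. by rewrite /energy sum_option mulr1. Qed.

Section IndicatorState.
Hypothesis s_gt0 : forall i, (0 < s i)%N.

Lemma exists_indicator_state (v0 : feat s) :
  exists y0 : state s, forall w, suffstat R y0 (Some w) = (Some w == v0)%:R.
Proof.
case: v0 => [[j a]|]; last first.
  by exists [ffun i => Ordinal (s_gt0 i)] => -[i a]; rewrite /= ffunE.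
have c_lt i : ((if j == i then (val a).+1 else 0) < s i)%N.
  case: eqP => [<-|_]; last exact: s_gt0.
  by rewrite -ltn_predRL ltn_ord.
exists [ffun i => Ordinal (c_lt i)] => -[i b]; rewrite /= ffunE /=.
move: b; have [<- b|nji b] := eqVneq j i.
  have [<-|nab] := eqVneq a b; first by rewrite !eqxx.
  rewrite eqSS val_eqE (negbTE nab) (inj_eq Some_inj) -tag_eqE /tag_eq /=.
  by rewrite tagged_asE eq_sym (negbTE nab) andbF.
by rewrite (inj_eq Some_inj) -tag_eqE /tag_eq /= eq_sym (negbTE nji).
Qed.

End IndicatorState.

End IndependenceStatistics.

Section HiddenEnergy.
Variable R : realType.
Variables (m : nat) (s : 'I_m -> nat).
Variables (b : feat s -> R) (v0 : feat s) (y0 : state s).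
Hypothesis y0E : forall w, suffstat R y0 (Some w) = (Some w == v0)%:R.

Lemma energy_indicator :
  energy b y0 = b None + (if v0 is Some w then b (Some w) else 0).
Proof.
rewrite energyE; congr (_ + _); case E: v0 => [w0|]; last first.
  by apply: big1 => w _; rewrite y0E E mulr0.
rewrite (bigD1 w0) // y0E E eqxx mulr1 big1 => [|w nw]; first by rewrite /= addr0.
by rewrite y0E E (inj_eq Some_inj) (negbTE nw) mulr0.
Qed.

(* A hidden state other than y0 either activates a feature other than v0,
   which costs at least T, or leaves v0 inactive. *)
Lemma energy_le_off_indicator (U T : R) :
  0 <= T -> energy b y0 <= U -> (v0 != None -> b None <= U - T) ->
  (forall w, Some w != v0 -> b (Some w) <= - T) ->
  forall y, y != y0 -> energy b y <= U - T.
Proof.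
move=> T0 by0 bN bS y yy0.
have [w1 w1y] : exists w1, suffstat R y (Some w1) != suffstat R y0 (Some w1).
  have [w|same] := pickP (fun w => suffstat R y (Some w) != suffstat R y0 (Some w)).
    by exists w.
  by case/eqP: yy0; apply: suffstat_inj => -[w|//]; apply/eqP/negbFE/same.
pose c w := if Some w == v0 then Num.max (b (Some w)) 0 else 0.
have c_ge0 w : 0 <= c w by rewrite /c; case: ifP; rewrite ?le_max ?lexx ?orbT.
have term_le w : b (Some w) * suffstat R y (Some w) <= c w.
  rewrite suffstat_Some; case: ifP => _; rewrite ?mulr0 // mulr1 /c.
  by case: ifP => [_|/negbT/bS]; rewrite ?le_max ?lexx //; lra.
have sum_c : \sum_w c w = if v0 is Some w0 then Num.max (b (Some w0)) 0 else 0.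
  rewrite /c; case: v0 => [w0|]; last exact: big1.
  rewrite (bigD1 w0) //= eqxx big1 ?addr0 // => w nw.
  by rewrite (inj_eq Some_inj) (negbTE nw).
have bN_c : b None + \sum_w c w <= U.
  move: by0; rewrite energy_indicator sum_c; case: v0 bN => [w0|] bN; last by rewrite !addr0.
  by have := bN isT; rewrite /Num.max; case: ifP => _; lra.
have rest_le : \sum_(w | w != w1) b (Some w) * suffstat R y (Some w)
    <= \sum_(w | w != w1) c w by apply: ler_sum => w _; exact: term_le.
rewrite energyE (bigD1 w1) //; move: rest_le w1y.
set rest := \sum_(w | w != w1) _ * _; set Fw1 := suffstat R y (Some w1).
rewrite y0E /= => rest_le.
have [->|->] : Fw1 = 1 \/ Fw1 = 0 by rewrite /Fw1 suffstat_Some; case: ifP; [left|right].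
  have [->|w1v0 _] := eqVneq (Some w1) v0; first by rewrite eqxx.
  have := bS _ w1v0.
  suff : \sum_(w | w != w1) c w <= \sum_w c w by lra.
  by rewrite [leRHS](bigD1 w1) //= lerDr.
have [w1v0 _|_] := eqVneq (Some w1) v0; last by rewrite eqxx.
have v0N : v0 != None by rewrite -w1v0.
have := bN v0N.
suff : \sum_(w | w != w1) c w = 0 by lra.
by apply: big1 => w nw; rewrite /c -w1v0 (inj_eq Some_inj) (negbTE nw).
Qed.

End HiddenEnergy.

Section Coordinates.
Variable R : realType.
Variables (n : nat) (s : 'I_n -> nat) (G : pred 'I_n).

Definition agree_on (x z : state s) : bool := [forall (i | G i), x i == z i].

Definition hamming_on (x z : state s) : R := \sum_(i | G i) (x i != z i)%:R.

Lemma hamming_on_eq0 (x z : state s) : agree_on x z -> hamming_on x z = 0.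
Proof.
by move=> /forall_inP xz; apply: big1 => i /xz ->.
Qed.

Lemma hamming_on_ge1 (x z : state s) : ~~ agree_on x z -> 1 <= hamming_on x z.
Proof.
case/forall_inPn => i Gi xz; rewrite /hamming_on (bigD1 i) //= xz lerDl.
by apply: sumr_ge0 => j _; rewrite ler0n.
Qed.

Lemma hamming_on_agree (x x' z : state s) :
  agree_on x x' -> hamming_on x z = hamming_on x' z.
Proof. by move=> /forall_inP xx'; apply: eq_bigr => i /xx' /eqP ->. Qed.

Lemma exists_code (T : finType) (x0 : state s) (t0 : T) :
  (\prod_(i | G i) s i <= #|T|)%N ->
  exists kappa : state s -> T,
    kappa x0 = t0 /\ forall x z, (kappa x == kappa z) = agree_on x z.
Proof.
pose restrict (x : state s) : {dffun forall i : {i | G i}, 'I_(s (val i))} :=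
  [ffun i => x (val i)].
move=> card_le; have [f [f_inj fx0]] : exists f, injective f /\ f (restrict x0) = t0.
  apply: exists_injection_at; apply: leq_trans card_le.
  rewrite card_dep_ffun foldrE big_map big_enum /= (big_sub G (fun i => s i)).
  by apply: eq_leq; apply: eq_big => // i; rewrite card_ord.
exists (f \o restrict); split=> // x z; rewrite /= (inj_eq f_inj).
apply/eqP/forall_inP => [/ffunP xz i Gi|xz].
  by have := xz (exist _ i Gi); rewrite !ffunE => ->.
by apply/ffunP => -[i Gi]; rewrite !ffunE; apply/eqP/xz.
Qed.

End Coordinates.

Section RBMWeight.
Variable R : realType.
Variables (n m : nat) (sx : 'I_n -> nat) (sy : 'I_m -> nat).

Lemma rbm_weight_additive (Phi : feat sy -> 'I_n -> nat -> R) (x : state sx) :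
  rbm_weight (fun u v => additive_coef (Phi v) u) x
  = \sum_y expR (energy (fun v => additive_fun (Phi v) x) y).
Proof.
apply: eq_bigr => y _; congr expR; rewrite exchange_big /=.
by apply: eq_bigr => v _; rewrite -mulr_suml suffstat_additive.
Qed.

Hypothesis sy_gt0 : forall j, (0 < sy j)%N.
Variables (G : pred 'I_n) (js : 'I_n).

Definition coord_sub_hamming (f : nat -> R) (a : R) (z : state sx) : 'I_n -> nat -> R :=
  fun i c => (if i == js then f c else 0) - a * (if G i then (c != val (z i))%:R else 0).

Lemma additive_coord_sub_hamming f a z x :
  additive_fun (coord_sub_hamming f a z) x = f (val (x js)) - a * hamming_on R G x z.
Proof.
rewrite /additive_fun sumrB -mulr_sumr -big_mkcond -(big_mkcond G) /=.
by rewrite big_pred1_eq.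
Qed.

Variables (x0 : state sx) (kappa : state sx -> feat sy).
Hypothesis kappa_x0 : kappa x0 = None.
Hypothesis kappaE : forall x z, (kappa x == kappa z) = agree_on G x z.

Definition code_rep (w : {j : 'I_m & 'I_(sy j).-1}) := [pick z | kappa z == Some w].

Lemma code_repP w z : code_rep w = Some z -> kappa z = Some w.
Proof. by rewrite /code_rep; case: pickP => // z' /eqP kz' [<-]. Qed.

Section Targets.
Variables (ell : feat sy -> nat -> R) (L U : R).
Hypothesis ell_bounds : forall v c, L <= ell v c <= U.

Section FixedPenalty.
Variable T : R.
Hypothesis T_ge0 : 0 <= T.

(* For x with code w the Hamming terms of the two active features cancel and
   the potentials add up to ell w x_js; for x with another code, the slope
   U - L + T (h + 1) pushes the potential of w below -T. *)
Definition code_phi (v : feat sy) : 'I_n -> nat -> R :=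
  match v with
  | None => coord_sub_hamming (ell None) T x0
  | Some w =>
    if code_rep w is Some z then
      let h := hamming_on R G z x0 in
      coord_sub_hamming (fun c => ell (Some w) c - ell None c + T * h)
        (U - L + T * (h + 1)) z
    else coord_sub_hamming (fun=> - T) 0 x0
  end.

Local Notation potential v x := (additive_fun (code_phi v) x).

Lemma potential_at_code x :
  potential None x + (if kappa x is Some w then potential (Some w) x else 0)
  = ell (kappa x) (val (x js)).
Proof.
rewrite /= additive_coord_sub_hamming; case E: (kappa x) => [w|]; last first.
  by rewrite hamming_on_eq0 -?kappaE ?E ?kappa_x0 // mulr0 subr0 addr0.
case rep_w: (code_rep w) => [z|]; last first.
  by move: rep_w; rewrite /code_rep; case: pickP => // /(_ x); rewrite E eqxx.
have xz : agree_on G x z by rewrite -kappaE E (code_repP rep_w).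
rewrite /= additive_coord_sub_hamming (hamming_on_eq0 R xz) (hamming_on_agree R x0 xz).
ring.
Qed.

Lemma potential_None_le x : kappa x != None -> potential None x <= U - T.
Proof.
move=> xN; rewrite /= additive_coord_sub_hamming.
have h1 : 1 <= hamming_on R G x x0 by rewrite hamming_on_ge1 // -kappaE kappa_x0.
have /andP[_ ellU] := ell_bounds None (val (x js)).
have : T <= T * hamming_on R G x x0 by rewrite ler_peMr.
lra.
Qed.

Lemma potential_Some_le x w : Some w != kappa x -> potential (Some w) x <= - T.
Proof.
move=> wx; rewrite /=; case rep_w: (code_rep w) => [z|]; last first.
  by rewrite additive_coord_sub_hamming mul0r subr0.
rewrite additive_coord_sub_hamming.
have h1 : 1 <= hamming_on R G x z.
  by rewrite hamming_on_ge1 // -kappaE (code_repP rep_w) eq_sym.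
have h0 : 0 <= hamming_on R G z x0 by apply: sumr_ge0 => i _; rewrite ler0n.
have /andP[Lw wU] := ell_bounds (Some w) (val (x js)).
have /andP[LN NU] := ell_bounds None (val (x js)).
set M := U - L + _.
have M0 : 0 <= M by rewrite /M; have := mulr_ge0 T_ge0 (addr_ge0 h0 ler01); lra.
have : M <= M * hamming_on R G x z by rewrite ler_peMr.
rewrite /M; lra.
Qed.

Definition code_theta (u : feat sx) (v : feat sy) : R := additive_coef (code_phi v) u.

Lemma rbm_weight_code_bounds x :
  expR (ell (kappa x) (val (x js))) <= rbm_weight code_theta x
    <= expR (ell (kappa x) (val (x js))) + #|state sy|%:R * expR (U - T).
Proof.
rewrite rbm_weight_additive; have [y0 y0E] := exists_indicator_state R sy_gt0 (kappa x).
set b := fun v => potential v x.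
have by0 : energy b y0 = ell (kappa x) (val (x js)).
  by rewrite (energy_indicator b y0E) -potential_at_code.
rewrite -by0; apply: sum_expR_bounds; apply: (energy_le_off_indicator y0E) => //.
- by rewrite by0; case/andP: (ell_bounds (kappa x) (val (x js))).
- exact: potential_None_le.
- exact: potential_Some_le.
Qed.

End FixedPenalty.

Lemma rbm_weight_approx e : 0 < e ->
  exists Theta : feat sx -> feat sy -> R,
    forall x, expR (ell (kappa x) (val (x js))) <= rbm_weight Theta x
    <= expR (ell (kappa x) (val (x js))) + e.
Proof.
move=> e_gt0; set N : R := #|state sy|%:R.
have N0 : 0 <= N by [].
pose T := N * expR U / e. (* then N * expR (U - T) <= e, as expR T >= 1 + T *)
have T0 : 0 <= T by rewrite /T divr_ge0 ?mulr_ge0 ?expR_ge0 // ltW.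
exists (code_theta T) => x.
have /andP[lb ub] := rbm_weight_code_bounds T0 x.
rewrite lb /=; apply: le_trans ub _; rewrite lerD2l.
rewrite expRB mulrA ler_pdivrMr ?expR_gt0 //.
have eT : e * T = N * expR U by rewrite /T mulrC divfK // gt_eqF.
have : e * (1 + T) <= e * expR T by apply: ler_wpM2l; [exact: ltW | exact: expR_ge1Dx].
nra.
Qed.

End Targets.

Lemma rbm_weight_approx_dependent (q : state sx -> R) (a b : R) : 0 < a ->
  (forall x, a <= q x <= b) ->
  (forall x z, agree_on G x z -> x js = z js -> q x = q z) ->
  forall e, 0 < e -> exists Theta : feat sx -> feat sy -> R,
    forall x, q x <= rbm_weight Theta x <= q x + e.
Proof.
move=> a_gt0 q_bd q_dep.
have q_gt0 x : 0 < q x by have /andP[+ _] := q_bd x; exact: lt_le_trans.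
have ln_q_dep x z : (kappa x, val (x js)) = (kappa z, val (z js)) -> ln (q x) = ln (q z).
  by move=> [/eqP xz /val_inj xzjs]; rewrite (q_dep x z) // -kappaE xz.
have [ell [ellE ell_range]] := factor_through x0 ln_q_dep.
have ell_bounds v c : ln a <= ell (v, c) <= ln b.
  have [x ->] := ell_range (v, c); have /andP[ax xb] := q_bd x.
  by rewrite !ler_ln ?posrE ?ax ?xb ?q_gt0 // (lt_le_trans _ xb) ?q_gt0.
move=> e /(rbm_weight_approx ell_bounds) [Theta Theta_bd]; exists Theta => x.
by have := Theta_bd x; rewrite /= ellE lnK ?posrE.
Qed.

End RBMWeight.

Theorem rbm_approx_of_dependence (R : realType) (n m : nat) (sx : 'I_n -> nat)
    (sy : 'I_m -> nat) (G : pred 'I_n) (js : 'I_n) (p : state sx -> R) :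
  (forall i, (0 < sx i)%N) -> (forall j, (0 < sy j)%N) ->
  (\prod_(i | G i) sx i <= #|feat sy|)%N ->
  (forall x, 0 <= p x) -> \sum_x p x = 1 ->
  (forall x z, agree_on G x z -> x js = z js -> p x = p z) ->
  forall eps, 0 < eps -> exists Theta : feat sx -> feat sy -> R,
    forall x, `|p x - rbm Theta x| < eps.
Proof.
move=> sx_gt0 sy_gt0 capacity p_ge0 p_sum1 p_dep eps eps_gt0.
pose x0 : state sx := [ffun i => Ordinal (sx_gt0 i)].
have [kappa [kappa_x0 kappaE]] := exists_code x0 None capacity.
set N : R := #|state sx|%:R; pose d := eps / (4 * (N + 1)).
have d_gt0 : 0 < d by rewrite divr_gt0 // mulr_gt0 // ltr_wpDl.
have p_bd x : d <= p x + d <= 1 + d.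
  by rewrite lerDr p_ge0 lerD2r -p_sum1 (bigD1 x) //= lerDl sumr_ge0.
have q_dep x z : agree_on G x z -> x js = z js -> p x + d = p z + d.
  by move=> xz xzjs; rewrite (p_dep x z).
have [Theta Theta_bd] :=
  rbm_weight_approx_dependent sy_gt0 kappa_x0 kappaE d_gt0 p_bd q_dep d_gt0.
exists Theta => x; apply: le_lt_trans
  (normalized_perturbation_le p_ge0 p_sum1 (ltW d_gt0) (ltW d_gt0) Theta_bd x) _.
rewrite -/N (_ : (N + 1) * (d + d) = eps / 2); first by rewrite ltr_pdivrMr //; lra.
by rewrite /d; field; rewrite !lt0r_neq0 // ltr_wpDl.
Qed.

Section PartitionModel.
Variables (R : realType) (T : finType) (blocks : {set {set T}}) (p : T -> R).
Hypothesis p_model : in_partition_model blocks p.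

Lemma partition_model_ge0 x : 0 <= p x.
Proof.
have [lam [lam_ge0 [_ ->]]] := p_model.
by apply: sumr_ge0 => A /lam_ge0 ?; rewrite mulr_ge0 ?divr_ge0.
Qed.

Lemma partition_model_sum1 : (forall A, A \in blocks -> A != set0) -> \sum_x p x = 1.
Proof.
move=> blocks_nz; have [lam [_ [lam_sum1 pE]]] := p_model.
under eq_bigr do rewrite pE; rewrite exchange_big /= -lam_sum1.
apply: eq_bigr => A /blocks_nz A_nz; rewrite -mulr_sumr /unif -mulr_suml.
have -> : \sum_x ((x \in A)%:R : R) = #|A|%:R.
  by rewrite -sumr_const [RHS]big_mkcond; apply: eq_bigr => x _; case: (x \in A).
by rewrite divff ?mulr1 // pnatr_eq0 cards_eq0.
Qed.

Lemma partition_model_eq x z :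
  (forall A, A \in blocks -> (x \in A) = (z \in A)) -> p x = p z.
Proof.
move=> xz; have [lam [_ [_ pE]]] := p_model; rewrite !pE.
by apply: eq_bigr => A /xz; rewrite /unif => ->.
Qed.

End PartitionModel.

Section Prefix.
Variables (n : nat) (sx : 'I_n -> nat) (k : nat).

Lemma mem_prefix_block (x : state sx) : x \in prefix_block k x.
Proof. by rewrite inE; apply/forallP => i; apply/implyP. Qed.

Lemma prefix_blocks_neq0 A : A \in prefix_blocks sx k -> A != set0.
Proof. by case/imsetP => w _ ->; apply/set0Pn; exists w; exact: mem_prefix_block. Qed.

Lemma prefix_block_agree (w x z : state sx) :
  agree_on (fun i : 'I_n => (i < k)%N) x z ->
  (x \in prefix_block k w) = (z \in prefix_block k w).
Proof.
move=> /forall_inP xz; rewrite !inE; apply: eq_forallb => i.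
by case: (ltnP i k) => //= ik; rewrite (eqP (xz i ik)).
Qed.

End Prefix.

Lemma card_feat (m : nat) (s : 'I_m -> nat) : #|feat s| = (1 + \sum_j (s j - 1))%N.
Proof.
rewrite card_option card_tagged sumnE big_map big_enum /= add1n.
by congr _.+1; apply: eq_bigr => j _; rewrite card_ord subn1.
Qed.

Lemma exists_prod_but_max_le (R : realFieldType) (I : finType) (P : pred I)
    (s : I -> nat) (N : nat) (i0 : I) :
  P i0 -> (forall i, (0 < s i)%N) ->
  (\prod_(i | P i) s i)%:R / (\max_(i | P i) s i)%:R <= N%:R :> R ->
  exists2 j, P j & (\prod_(i | P i && (i != j)) s i <= N)%N.
Proof.
move=> Pi0 s_gt0 bound; have [|j Pj maxj] := eq_bigmax_cond s (A := P).
  by apply/card_gt0P; exists i0.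
exists j => //; move: bound; rewrite (bigD1 j) //= natrM.
rewrite (_ : \max_(i | P i) s i = s j); last by rewrite -maxj; apply: eq_bigl.
by rewrite mulrAC divff ?mul1r ?pnatr_eq0 -?lt0n // ler_nat.
Qed.

Theorem corollary1 (R : realType) (n m : nat) (sx : 'I_n -> nat)
  (sy : 'I_m -> nat) (k : nat)
  (hsx : forall i, (0 < sx i)%N) (hsy : forall j, (0 < sy j)%N)
  (hk1 : (1 <= k)%N) (hkn : (k <= n)%N)
  (hcond : ((\prod_(i : 'I_n | (i < k)%N) sx i)%:R
              / (\max_(i : 'I_n | (i < k)%N) sx i)%:R : R)
           <= (1 + \sum_(j : 'I_m) (sy j - 1))%:R) :
  forall p : state sx -> R,
    in_partition_model (prefix_blocks sx k) p ->
    forall eps : R, 0 < eps ->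
      exists Theta : feat sx -> feat sy -> R,
        forall x : state sx, `|p x - rbm Theta x| < eps.
Proof.
move=> p p_model; rewrite -card_feat in hcond.
have [js js_lt_k capacity] :=
  exists_prod_but_max_le (i0 := Ordinal (leq_trans hk1 hkn)) hk1 hsx hcond.
apply: (rbm_approx_of_dependence (G := fun i => (i < k)%N && (i != js)) (js := js)) => //.
- exact: partition_model_ge0 p_model.
- exact: partition_model_sum1 p_model (@prefix_blocks_neq0 _ _ _).
move=> x z /forall_inP xz xz_js; apply: (partition_model_eq p_model) => _ /imsetP[w _ ->].
apply: prefix_block_agree; apply/forall_inP => i ik.
by have [->|ij] := eqVneq i js; [apply/eqP | apply: xz; rewrite ik ij].
Qed.
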